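(* Let $R>0$ and let $S$ be the pseudosphere of radius $R$, parametrized by \[ \phi(u,v)=R\big(\sin v\cos u,\ \sin v\sin u,\ \ln\tan(v/2)+\cos v\big),\qquad 0<v<\pi/2, \] and oriented by the unit normal $N=\frac{\phi_u\times\phi_v}{\|\phi_u\times\phi_v\|}$. Let $0<\theta<\pi$ and let $\gamma$ be a loxodrome on $S$ with characteristic angle $\theta$, parametrized by arc length. Then the geodesic curvature of $\gamma$ is constant and equal to \[ k=-\frac{1}{R}\cos\theta. \]
   Context: For an oriented surface $S\subset\mathbb{R}^3$ with unit normal field $N$, the geodesic curvature of a unit-speed curve $\alpha$ on $S$ is $k=\langle\alpha'',N\times\alpha'\rangle$. The parallels of the pseudosphere are the circles $t\mapsto\phi(t,v)$ for fixed $v$. A loxodrome with characteristic angle $\theta\in(0,\pi)$ is a curve meeting all parallels at the fixed angle $\theta$, where $\theta$ is the signed angle (with respect to $N$) from the velocity $\frac{\partial}{\partial t}\phi(t,v)$ of the parallel to the velocity of the curve; the curve is oriented accordingly. *)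

From Stdlib Require Import Reals.
From Coquelicot Require Import Coquelicot.
Open Scope R_scope.

Definition vec3 : Type := (R * R * R)%type.
Definition vx (a : vec3) : R := fst (fst a).
Definition vy (a : vec3) : R := snd (fst a).
Definition vz (a : vec3) : R := snd a.
Definition mk3 (x y z : R) : vec3 := (x, y, z).

Definition dot3 (a b : vec3) : R := vx a * vx b + vy a * vy b + vz a * vz b.
Definition cross3 (a b : vec3) : vec3 :=
  mk3 (vy a * vz b - vz a * vy b)
      (vz a * vx b - vx a * vz b)
      (vx a * vy b - vy a * vx b).
Definition scal3 (c : R) (a : vec3) : vec3 := mk3 (c * vx a) (c * vy a) (c * vz a).
Definition norm3 (a : vec3) : R := sqrt (dot3 a a).

Definition vderive (f : R -> vec3) (t : R) : vec3 :=
  mk3 (Derive (fun s => vx (f s)) t) (Derive (fun s => vy (f s)) t)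
      (Derive (fun s => vz (f s)) t).
Definition vderivable (f : R -> vec3) (t : R) : Prop :=
  ex_derive (fun s => vx (f s)) t /\ ex_derive (fun s => vy (f s)) t /\
  ex_derive (fun s => vz (f s)) t.

Definition phi (Rr u v : R) : vec3 :=
  mk3 (Rr * sin v * cos u) (Rr * sin v * sin u) (Rr * (ln (tan (v / 2)) + cos v)).
Definition phi_u (Rr u v : R) : vec3 := vderive (fun t => phi Rr t v) u.
Definition phi_v (Rr u v : R) : vec3 := vderive (fun t => phi Rr u t) v.

Definition normalN (Rr u v : R) : vec3 :=
  let c := cross3 (phi_u Rr u v) (phi_v Rr u v) in scal3 (/ norm3 c) c.

Definition geod_curv (Rr : R) (alpha : R -> vec3) (u v : R -> R) (s : R) : R :=
  dot3 (vderive (vderive alpha) s) (cross3 (normalN Rr (u s) (v s)) (vderive alpha s)).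

Definition unit_speed_curve_on_pseudosphere (Rr a b : R) (alpha : R -> vec3)
  (u v : R -> R) : Prop :=
  forall s, a < s < b ->
    0 < v s < PI / 2 /\
    alpha s = phi Rr (u s) (v s) /\
    vderivable alpha s /\
    vderivable (vderive alpha) s /\
    norm3 (vderive alpha s) = 1.

(* Loxodrome with characteristic angle theta: at every point the signed angle
   (w.r.t. N) from the parallel's velocity phi_u to alpha' equals theta, i.e.
   with e = phi_u/|phi_u|:  cos theta = <e, alpha'>, sin theta = <N x e, alpha'>. *)
Definition loxodrome (Rr a b theta : R) (alpha : R -> vec3) (u v : R -> R) : Prop :=
  forall s, a < s < b ->
    let e := scal3 (/ norm3 (phi_u Rr (u s) (v s))) (phi_u Rr (u s) (v s)) in
    cos theta = dot3 e (vderive alpha s) /\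
    sin theta = dot3 (cross3 (normalN Rr (u s) (v s)) e) (vderive alpha s).

(* Along the loxodrome use the orthonormal frame (e, m) of unit parallel and
   meridian directions, so that N = e x m.  The loxodrome condition says that
   the unit tangent is T = cos theta e + sin theta m, hence
   N x T = cos theta m - sin theta e, and since the derivative of an orthonormal
   frame is skew, k = <T', N x T> = - <e, m'>.  At a point p of the pseudosphere
   the meridian direction is (p_x / R, p_y / R, sqrt (1 - (p_x^2 + p_y^2) / R^2)),
   so the horizontal part of m' is that of T / R; e being horizontal,
   <e, m'> = <e, T> / R = cos theta / R. *)

From Stdlib Require Import Reals Lra.
From Coquelicot Require Import Coquelicot.
Open Scope R_scope.

Definition add3 (a b : vec3) : vec3 := mk3 (vx a + vx b) (vy a + vy b) (vz a + vz b).

Ltac unfold_vec3 := unfold dot3, cross3, scal3, add3, vx, vy, vz, mk3; cbn [fst snd].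

Lemma mk3_eq x y z x' y' z' : x = x' -> y = y' -> z = z' -> mk3 x y z = mk3 x' y' z'.
Proof. now intros -> -> ->. Qed.

Definition orthonormal (e f : vec3) : Prop :=
  dot3 e e = 1 /\ dot3 f f = 1 /\ dot3 e f = 0.

Lemma dot3_comm a b : dot3 a b = dot3 b a.
Proof. unfold dot3; ring. Qed.

Lemma dot3_ge0 a : 0 <= dot3 a a.
Proof. unfold dot3; nra. Qed.

Lemma norm3_eq1 a : norm3 a = 1 -> dot3 a a = 1.
Proof.
unfold norm3; intros H.
now rewrite <- (sqrt_sqrt (dot3 a a)), H by apply dot3_ge0; ring.
Qed.

Lemma normalize_scal3 c n : 0 < c -> dot3 n n = 1 ->
  scal3 (/ norm3 (scal3 c n)) (scal3 c n) = n.
Proof.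
intros Hc Hn.
assert (Hnorm : norm3 (scal3 c n) = c).
{ unfold norm3; apply sqrt_lem_1; [apply dot3_ge0 | lra |].
  transitivity (c * c * dot3 n n); [rewrite Hn; ring | unfold_vec3; ring]. }
rewrite Hnorm; destruct n as [[x y] z]; unfold_vec3; apply mk3_eq; field; lra.
Qed.

Lemma cross3_cross3_l a b c :
  cross3 (cross3 a b) c = add3 (scal3 (dot3 a c) b) (scal3 (- dot3 b c) a).
Proof. unfold_vec3; apply mk3_eq; ring. Qed.

Lemma orthonormal_cross3_cross3 e f : orthonormal e f -> cross3 (cross3 e f) e = f.
Proof.
intros (Hee & _ & Hef).
rewrite cross3_cross3_l, Hee, dot3_comm, Hef.
destruct f as [[x y] z]; unfold_vec3; apply mk3_eq; ring.
Qed.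

Lemma orthonormal_decomposition e f w : orthonormal e f ->
  dot3 w w = dot3 e w ^ 2 + dot3 f w ^ 2 ->
  w = add3 (scal3 (dot3 e w) e) (scal3 (dot3 f w) f).
Proof.
intros (Hee & Hff & Hef) Hw.
set (p := dot3 e w) in *; set (q := dot3 f w) in *.
set (r := add3 w (scal3 (-1) (add3 (scal3 p e) (scal3 q f)))).
assert (Hr : dot3 r r = 0).
{ transitivity (dot3 w w - 2 * p ^ 2 - 2 * q ^ 2 + p ^ 2 * dot3 e e + q ^ 2 * dot3 f f
                + 2 * p * q * dot3 e f).
  - unfold r, p, q; unfold_vec3; ring.
  - rewrite Hee, Hff, Hef, Hw; ring. }
clearbody p q; destruct w as [[x y] z]; revert Hr; unfold r; unfold_vec3.
set (dx := x + -1 * _); set (dy := y + -1 * _); set (dz := z + -1 * _); intros Hr.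
assert (dx = 0 /\ dy = 0 /\ dz = 0) as (Hx & Hy & Hz) by (repeat split; nra).
unfold dx, dy, dz in *; apply mk3_eq; lra.
Qed.

Lemma constant_angle_frame_curvature e f e' f' c s : orthonormal e f ->
  dot3 e' e = 0 -> dot3 f' f = 0 -> dot3 e' f + dot3 e f' = 0 -> c ^ 2 + s ^ 2 = 1 ->
  dot3 (add3 (scal3 c e') (scal3 s f')) (cross3 (cross3 e f) (add3 (scal3 c e) (scal3 s f)))
  = - dot3 e f'.
Proof.
intros (Hee & Hff & Hef) He' Hf' Hef' Hcs.
rewrite cross3_cross3_l.
transitivity ((c * dot3 e e + s * dot3 e f) * (c * dot3 e' f + s * dot3 f' f)
              - (c * dot3 e f + s * dot3 f f) * (c * dot3 e' e + s * dot3 f' e)).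
{ unfold_vec3; ring. }
rewrite Hee, Hff, Hef, He', Hf', (dot3_comm f' e).
replace (dot3 e' f) with (- dot3 e f') by lra.
transitivity (- (c ^ 2 + s ^ 2) * dot3 e f'); [ring | rewrite Hcs; ring].
Qed.

Lemma vderive_ext_loc f g t :
  locally t (fun s => f s = g s) -> vderive f t = vderive g t.
Proof.
intros Hfg; unfold vderive.
f_equal; apply Derive_ext_loc; revert Hfg; apply filter_imp; intros s ->; reflexivity.
Qed.

Lemma vderive_comb a b f g t : vderivable f t -> vderivable g t ->
  vderive (fun s => add3 (scal3 a (f s)) (scal3 b (g s))) t
  = add3 (scal3 a (vderive f t)) (scal3 b (vderive g t)).
Proof.
intros (fx & fy & fz) (gx & gy & gz); unfold vderive; unfold_vec3.
rewrite !Derive_plus, !Derive_scal; auto using ex_derive_scal.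
Qed.

Lemma Derive_dot3 f g t : vderivable f t -> vderivable g t ->
  Derive (fun s => dot3 (f s) (g s)) t
  = dot3 (vderive f t) (g t) + dot3 (f t) (vderive g t).
Proof.
intros (fx & fy & fz) (gx & gy & gz); unfold dot3.
rewrite !Derive_plus, !Derive_mult; auto using ex_derive_plus, ex_derive_mult.
unfold vderive; unfold_vec3; ring.
Qed.

Lemma vderive_dot3_locally_constant f g t c : vderivable f t -> vderivable g t ->
  locally t (fun s => dot3 (f s) (g s) = c) ->
  dot3 (vderive f t) (g t) + dot3 (f t) (vderive g t) = 0.
Proof.
intros Hf Hg Hc.
rewrite <- Derive_dot3 by assumption.
rewrite (Derive_ext_loc _ (fun _ => c)) by exact Hc.
apply Derive_const.
Qed.

Lemma vderive_orthonormal_frame e f t : vderivable e t -> vderivable f t ->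
  locally t (fun s => orthonormal (e s) (f s)) ->
  dot3 (vderive e t) (e t) = 0 /\ dot3 (vderive f t) (f t) = 0 /\
  dot3 (vderive e t) (f t) + dot3 (e t) (vderive f t) = 0.
Proof.
intros He Hf Honb.
assert (Hloc : forall P : R -> Prop,
          (forall s, orthonormal (e s) (f s) -> P s) -> locally t P)
  by (intros P HP; revert Honb; apply filter_imp; exact HP).
pose proof (vderive_dot3_locally_constant e e t 1 He He (Hloc _ (fun s H => proj1 H))) as Hee.
pose proof (vderive_dot3_locally_constant f f t 1 Hf Hf
              (Hloc _ (fun s H => proj1 (proj2 H)))) as Hff.
pose proof (vderive_dot3_locally_constant e f t 0 He Hf
              (Hloc _ (fun s H => proj2 (proj2 H)))) as Hef.
rewrite (dot3_comm (e t)) in Hee; rewrite (dot3_comm (f t)) in Hff.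
repeat split; lra.
Qed.

Lemma ex_derive_div_hypot (X Y Z : R -> R) t : ex_derive X t -> ex_derive Y t ->
  ex_derive Z t -> 0 < X t ^ 2 + Y t ^ 2 ->
  ex_derive (fun s => Z s / sqrt (X s ^ 2 + Y s ^ 2)) t.
Proof.
intros HX HY HZ Hpos.
assert (0 < sqrt (X t ^ 2 + Y t ^ 2)) by now apply sqrt_lt_R0.
auto_derive; repeat match goal with |- _ /\ _ => split end; auto; simpl in *; lra.
Qed.

Lemma ex_derive_sqrt_1_sub_hypot (X Y : R -> R) t : ex_derive X t -> ex_derive Y t ->
  X t ^ 2 + Y t ^ 2 < 1 -> ex_derive (fun s => sqrt (1 - (X s ^ 2 + Y s ^ 2))) t.
Proof.
intros HX HY Hlt.
auto_derive; repeat match goal with |- _ /\ _ => split end; auto; simpl in *; lra.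
Qed.

Lemma sin_cos_sq x : sin x ^ 2 + cos x ^ 2 = 1.
Proof. rewrite <- (sin2_cos2 x); unfold Rsqr; ring. Qed.

Lemma cos_sq x : cos x ^ 2 = 1 - sin x ^ 2.
Proof. rewrite <- (sin_cos_sq x); ring. Qed.

(* The frame is written as a function of the surface point rather than of
   (u, v): along the curve u and v need not be differentiable (u is only
   determined modulo 2 PI), whereas the point is. *)
Definition parallel_dir (p : vec3) : vec3 :=
  let r := sqrt (vx p ^ 2 + vy p ^ 2) in mk3 (- vy p / r) (vx p / r) 0.

Definition meridian_dir (Rr : R) (p : vec3) : vec3 :=
  mk3 (vx p / Rr) (vy p / Rr) (sqrt (1 - ((vx p / Rr) ^ 2 + (vy p / Rr) ^ 2))).

Lemma vderivable_parallel_dir f t : vderivable f t ->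
  0 < vx (f t) ^ 2 + vy (f t) ^ 2 -> vderivable (fun s => parallel_dir (f s)) t.
Proof.
intros (Hx & Hy & _) Hpos; split; [|split].
- apply (ex_derive_div_hypot (fun s => vx (f s)) (fun s => vy (f s))); auto.
  now apply (ex_derive_opp (fun s => vy (f s))).
- now apply (ex_derive_div_hypot (fun s => vx (f s)) (fun s => vy (f s))).
- exact (ex_derive_const 0 t).
Qed.

Lemma vderivable_meridian_dir Rr f t : vderivable f t ->
  (vx (f t) / Rr) ^ 2 + (vy (f t) / Rr) ^ 2 < 1 ->
  vderivable (fun s => meridian_dir Rr (f s)) t.
Proof.
intros (Hx & Hy & _) Hlt.
assert (HX : ex_derive (fun s => vx (f s) / Rr) t) by exact (ex_derive_scal_l _ t (/ Rr) Hx).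
assert (HY : ex_derive (fun s => vy (f s) / Rr) t) by exact (ex_derive_scal_l _ t (/ Rr) Hy).
split; [exact HX | split; [exact HY |]].
now apply (ex_derive_sqrt_1_sub_hypot (fun s => vx (f s) / Rr) (fun s => vy (f s) / Rr)).
Qed.

Lemma dot3_vderive_meridian_dir Rr f t w : vz w = 0 ->
  dot3 w (vderive (fun s => meridian_dir Rr (f s)) t) = dot3 w (vderive f t) / Rr.
Proof.
intros Hw; unfold dot3; rewrite Hw.
change (vx (vderive (fun s => meridian_dir Rr (f s)) t))
  with (Derive (fun s => vx (f s) * / Rr) t).
change (vy (vderive (fun s => meridian_dir Rr (f s)) t))
  with (Derive (fun s => vy (f s) * / Rr) t).
rewrite !Derive_scal_l; unfold vderive, Rdiv; unfold_vec3; ring.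
Qed.

Section Pseudosphere.

Variables (Rr u v : R).
Hypotheses (HR : 0 < Rr) (Hv : 0 < v < PI / 2).

Let sin_v_pos : 0 < sin v.
Proof. apply sin_gt_0; lra. Qed.

Let cos_v_pos : 0 < cos v.
Proof. apply cos_gt_0; lra. Qed.

Lemma phi_u_eq : phi_u Rr u v = scal3 (Rr * sin v) (mk3 (- sin u) (cos u) 0).
Proof.
unfold phi_u, vderive, phi; unfold_vec3; apply mk3_eq.
- apply is_derive_unique; auto_derive; auto; ring.
- apply is_derive_unique; auto_derive; auto; ring.
- rewrite Derive_const; ring.
Qed.

Lemma phi_v_eq :
  phi_v Rr u v = mk3 (Rr * cos v * cos u) (Rr * cos v * sin u) (Rr * (/ sin v - sin v)).
Proof.
assert (Hs : 0 < sin (v / 2)) by (apply sin_gt_0; lra).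
assert (Hc : 0 < cos (v / 2)) by (apply cos_gt_0; lra).
assert (Hsv : sin v = 2 * sin (v / 2) * cos (v / 2)).
{ rewrite <- sin_2a; f_equal; field. }
pose proof (sin_cos_sq (v / 2)) as Hp.
unfold phi_v, vderive, phi; unfold_vec3; apply mk3_eq.
- apply is_derive_unique; auto_derive; auto; ring.
- apply is_derive_unique; auto_derive; auto; ring.
- apply is_derive_unique; unfold tan; auto_derive.
  + repeat split; try lra; apply Rdiv_lt_0_compat; lra.
  + change (v * / 2) with (v / 2).
    replace (/ sin v) with ((sin (v / 2) ^ 2 + cos (v / 2) ^ 2) / sin v)
      by (rewrite Hp; field; lra).
    rewrite Hsv; field; lra.
Qed.

Lemma cross3_phi_u_phi_v : cross3 (phi_u Rr u v) (phi_v Rr u v)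
  = scal3 (Rr ^ 2 * cos v) (mk3 (cos v * cos u) (cos v * sin u) (- sin v)).
Proof.
rewrite phi_u_eq, phi_v_eq; unfold_vec3; apply mk3_eq.
- field_simplify; [rewrite (cos_sq v); ring | lra].
- field_simplify; [rewrite (cos_sq v); ring | lra].
- transitivity (- Rr ^ 2 * cos v * sin v * (sin u ^ 2 + cos u ^ 2)); [ring|].
  rewrite sin_cos_sq; ring.
Qed.

Lemma phi_horizontal_radius :
  vx (phi Rr u v) ^ 2 + vy (phi Rr u v) ^ 2 = (Rr * sin v) ^ 2.
Proof.
unfold phi; unfold_vec3.
transitivity ((Rr * sin v) ^ 2 * (sin u ^ 2 + cos u ^ 2)); [ring|].
rewrite sin_cos_sq; ring.
Qed.

Lemma phi_horizontal_pos : 0 < vx (phi Rr u v) ^ 2 + vy (phi Rr u v) ^ 2.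
Proof. rewrite phi_horizontal_radius; apply pow_lt, Rmult_lt_0_compat; assumption. Qed.

Lemma phi_horizontal_scaled :
  (vx (phi Rr u v) / Rr) ^ 2 + (vy (phi Rr u v) / Rr) ^ 2 = sin v ^ 2.
Proof.
transitivity ((vx (phi Rr u v) ^ 2 + vy (phi Rr u v) ^ 2) / Rr ^ 2); [field; lra|].
rewrite phi_horizontal_radius; field; lra.
Qed.

Lemma phi_horizontal_lt :
  (vx (phi Rr u v) / Rr) ^ 2 + (vy (phi Rr u v) / Rr) ^ 2 < 1.
Proof. rewrite phi_horizontal_scaled; pose proof (sin_cos_sq v); nra. Qed.

Lemma parallel_dir_phi : parallel_dir (phi Rr u v) = mk3 (- sin u) (cos u) 0.
Proof.
unfold parallel_dir; rewrite phi_horizontal_radius, sqrt_pow2 by nra.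
unfold phi; unfold_vec3; apply mk3_eq; field; lra.
Qed.

Lemma meridian_dir_phi :
  meridian_dir Rr (phi Rr u v) = mk3 (sin v * cos u) (sin v * sin u) (cos v).
Proof.
unfold meridian_dir; rewrite phi_horizontal_scaled, <- cos_sq, sqrt_pow2 by lra.
unfold phi; unfold_vec3; apply mk3_eq; field; lra.
Qed.

Lemma orthonormal_pseudosphere_frame :
  orthonormal (parallel_dir (phi Rr u v)) (meridian_dir Rr (phi Rr u v)).
Proof.
rewrite parallel_dir_phi, meridian_dir_phi; unfold orthonormal; unfold_vec3.
pose proof (sin_cos_sq u); pose proof (sin_cos_sq v).
repeat split; nra.
Qed.

Lemma unit_phi_u_eq :
  scal3 (/ norm3 (phi_u Rr u v)) (phi_u Rr u v) = parallel_dir (phi Rr u v).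
Proof.
rewrite phi_u_eq, parallel_dir_phi, normalize_scal3; [reflexivity | nra |].
pose proof (sin_cos_sq u); unfold_vec3; lra.
Qed.

Lemma normalN_eq :
  normalN Rr u v = cross3 (parallel_dir (phi Rr u v)) (meridian_dir Rr (phi Rr u v)).
Proof.
pose proof (sin_cos_sq u); pose proof (sin_cos_sq v).
unfold normalN; rewrite cross3_phi_u_phi_v, normalize_scal3.
- rewrite parallel_dir_phi, meridian_dir_phi; unfold_vec3; apply mk3_eq; nra.
- apply Rmult_lt_0_compat; [apply pow_lt|]; assumption.
- unfold_vec3; nra.
Qed.

End Pseudosphere.

Lemma loxodrome_tangent_decomposition Rr theta u v w : 0 < Rr -> 0 < v < PI / 2 ->
  norm3 w = 1 ->
  let e := scal3 (/ norm3 (phi_u Rr u v)) (phi_u Rr u v) in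
  cos theta = dot3 e w -> sin theta = dot3 (cross3 (normalN Rr u v) e) w ->
  w = add3 (scal3 (cos theta) (parallel_dir (phi Rr u v)))
           (scal3 (sin theta) (meridian_dir Rr (phi Rr u v))).
Proof.
intros HR Hv Hw e Hc Hs.
pose proof (orthonormal_pseudosphere_frame Rr u v HR Hv) as Hframe.
unfold e in *; rewrite unit_phi_u_eq in Hc, Hs by assumption.
rewrite normalN_eq, orthonormal_cross3_cross3 in Hs by assumption.
rewrite Hc, Hs; apply orthonormal_decomposition; [assumption|].
rewrite <- Hc, <- Hs, norm3_eq1 by assumption.
rewrite Rplus_comm; symmetry; apply sin_cos_sq.
Qed.

Lemma loxodrome_frame Rr theta a b alpha u v : 0 < Rr ->
  unit_speed_curve_on_pseudosphere Rr a b alpha u v -> loxodrome Rr a b theta alpha u v ->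
  forall t, a < t < b ->
  orthonormal (parallel_dir (alpha t)) (meridian_dir Rr (alpha t)) /\
  vderive alpha t = add3 (scal3 (cos theta) (parallel_dir (alpha t)))
                         (scal3 (sin theta) (meridian_dir Rr (alpha t))).
Proof.
intros HR Hcurve Hlox t Ht.
destruct (Hcurve t Ht) as (Hv & Halpha & _ & _ & Hunit); destruct (Hlox t Ht) as [Hc Hs].
rewrite Halpha; split.
- now apply orthonormal_pseudosphere_frame.
- now apply (loxodrome_tangent_decomposition Rr theta (u t) (v t)).
Qed.

Lemma vderivable_pseudosphere_frame Rr alpha u v s : 0 < Rr -> 0 < v < PI / 2 ->
  alpha s = phi Rr u v -> vderivable alpha s ->
  vderivable (fun t => parallel_dir (alpha t)) s /\
  vderivable (fun t => meridian_dir Rr (alpha t)) s.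
Proof.
intros HR Hv Halpha Hd; split.
- apply vderivable_parallel_dir; [|rewrite Halpha; apply phi_horizontal_pos]; assumption.
- apply vderivable_meridian_dir; [|rewrite Halpha; apply phi_horizontal_lt]; assumption.
Qed.

Theorem proposition23 (Rr theta a b : R) (alpha : R -> vec3) (u v : R -> R) :
  0 < Rr -> 0 < theta < PI -> a < b ->
  unit_speed_curve_on_pseudosphere Rr a b alpha u v ->
  loxodrome Rr a b theta alpha u v ->
  forall s, a < s < b -> geod_curv Rr alpha u v s = - (1 / Rr) * cos theta.
Proof.
intros HR _ _ Hcurve Hlox s Hs.
set (E := fun t => parallel_dir (alpha t)); set (M := fun t => meridian_dir Rr (alpha t)).
assert (Hframe : forall t, a < t < b -> orthonormal (E t) (M t) /\
          vderive alpha t = add3 (scal3 (cos theta) (E t)) (scal3 (sin theta) (M t)))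
  by exact (loxodrome_frame Rr theta a b alpha u v HR Hcurve Hlox).
assert (Hnear : forall P : R -> Prop, (forall t, a < t < b -> P t) -> locally s P).
{ intros P HP; apply (locally_interval _ _ a b); simpl; intuition. }
destruct (Hcurve s Hs) as (Hv & Halpha & Hd & _ & _).
destruct (vderivable_pseudosphere_frame Rr alpha (u s) (v s) s) as [HE HM]; try assumption.
destruct (vderive_orthonormal_frame E M s HE HM) as (HEE & HMM & HEM).
{ apply Hnear; intros t Ht; apply Hframe, Ht. }
assert (HT' : vderive (vderive alpha) s
              = add3 (scal3 (cos theta) (vderive E s)) (scal3 (sin theta) (vderive M s))).
{ rewrite <- vderive_comb by assumption; apply vderive_ext_loc, Hnear.
  intros t Ht; apply Hframe, Ht. }
destruct (Hlox s Hs) as [Hcos _]; rewrite unit_phi_u_eq, <- Halpha in Hcos by assumption.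
unfold geod_curv; rewrite HT', (proj2 (Hframe s Hs)), normalN_eq, <- Halpha by assumption.
rewrite constant_angle_frame_curvature; try assumption.
- unfold E, M; rewrite dot3_vderive_meridian_dir, <- Hcos by reflexivity; field; lra.
- apply Hframe, Hs.
- rewrite Rplus_comm; apply sin_cos_sq.
Qed.
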